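(* For every instance of (weighted) Maximum Coverage in which every set in $\mathcal{R}$ has cardinality at most $r$, the greedy algorithm outputs $k$ sets whose union has weight at least $\left(1-(1-1/r)^r\right)$ times the optimum weight.
   Context: An instance of weighted Maximum Coverage is $({U},\mathcal{R},k)$ with ${U}$ finite, $\mathcal{R}$ a collection of subsets of ${U}$, $k$ a positive integer, and weights $w:{U}\to\mathbb{R}_{\ge0}$, with $w(S)=\sum_{x\in S}w(x)$; the goal is to choose $k$ sets of $\mathcal{R}$ maximizing the weight of their union. The greedy algorithm chooses $k$ sets sequentially, each new set maximizing the weight of the elements it covers that are not covered by previously chosen sets (ties broken arbitrarily). *)

From HB Require Import structures.
From mathcomp Require Import all_boot all_order all_algebra.
Set Implicit Arguments. Unset Strict Implicit. Unset Printing Implicit Defensive.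
Import Order.TTheory GRing.Theory Num.Theory.
Local Open Scope ring_scope.

Definition weight (R : numDomainType) (U : finType) (w : U -> R) (S : {set U}) : R :=
  \sum_(x in S) w x.

Definition union_seq (U : finType) (s : seq {set U}) : {set U} :=
  \bigcup_(S <- s) S.

Definition greedy_output (R : numDomainType) (U : finType) (w : U -> R)
    (Rc : {set {set U}}) (k : nat) (s : seq {set U}) : Prop :=
  size s = k /\
  forall i : nat, (i < k)%N ->
    nth set0 s i \in Rc /\
    forall T : {set U}, T \in Rc ->
      weight w (T :\: union_seq (take i s))
        <= weight w (nth set0 s i :\: union_seq (take i s)).

Definition is_k_selection (U : finType) (Rc : {set {set U}}) (k : nat) (s : seq {set U}) : Prop :=
  size s = k /\ all (fun S => S \in Rc) s.

From mathcomp Require Import all_boot all_order all_algebra.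
From mathcomp Require Import ring lra zify.
Import Order.TTheory GRing.Theory Num.Theory.
Set Implicit Arguments. Unset Strict Implicit. Unset Printing Implicit Defensive.
Local Open Scope ring_scope.

(* Let g_i be the gain of the i-th greedy step (non-increasing) and E = g_(k-1)
   the last gain.  The optimal union is split into disjoint parts P_j (the j-th
   optimal set minus the earlier ones); rho_j(i) is the weight of P_j left
   uncovered after i greedy steps.  Each P_j receives the charge
     Phi_j = rho_j(0) - rho_j(k) + E - E * sum_i (rho_j(i) - rho_j(i+1)) / g_i.
   Summing over j and exchanging the sums, step i contributes D_i + E - E D_i/g_i
   where D_i <= g_i is what step i takes from the optimal union; this is at most
   g_i, so the total charge is at most the greedy weight.

   Conversely Phi_j >= (1 - (1 - 1/r)^r) w(P_j): bounding g_i below by the level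
   s_i = max(rho_j(i), E), an induction over the greedy steps produces at most
   r - 1 ratios x = s_(i+1)/s_i in [0,1] with E <= s_0 * prod x and
   s_0 - E * sum (1 - x) <= Phi_j (there are at most |P_j| <= r strict drops, and
   a final drop to zero needs no ratio); AM-GM on the ratios and sum (1 - x)
   then gives prod x * sum (1 - x) <= (1 - 1/r)^r. *)

Lemma big_nth_pad {T R : Type} {idx : R} {op : Monoid.law idx}
    (x0 : T) (F : T -> R) {s : seq T} {n : nat} :
  (size s <= n)%N -> F x0 = idx ->
  \big[op/idx]_(i < n) F (nth x0 s i) = \big[op/idx]_(x <- s) F x.
Proof.
move=> le_s_n F0; rewrite (big_nth x0) big_mkord.
rewrite (big_ord_widen n (fun i => F (nth x0 s i)) le_s_n) [RHS]big_mkcond /=.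
by apply: eq_bigr => i _; case: ltnP => // /(nth_default x0) ->.
Qed.

(* AM-GM applied to the numbers of s (padded with ones to length n) together
   with the extra factor sum (1 - x); these n + 1 numbers sum to n. *)
Lemma prod_mul_sum_compl_le (R : realFieldType) (n : nat) (s : seq R) :
  (size s <= n)%N -> all (fun x => 0 <= x <= 1) s ->
  (\prod_(x <- s) x) * \sum_(x <- s) (1 - x) <= (n%:R / n.+1%:R) ^+ n.+1.
Proof.
move=> le_s_n s01.
have x01 i : 0 <= nth 1 s i <= 1.
  case: (ltnP i (size s)) => [lt_i_s | /(nth_default 1) ->]; last by rewrite ler01 lexx.
  exact: (all_nthP 1 s01).
pose S := \sum_(x <- s) (1 - x).
pose F (i : 'I_n.+1) := if (i < n)%N then nth 1 s i else S.
have F_ge0 : {in 'I_n.+1, forall i, 0 <= F i}.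
  move=> i _; rewrite /F; case: ifP => _; first by case/andP: (x01 i).
  rewrite /S -(big_nth_pad (x0 := 1) (F := fun x => 1 - x) le_s_n) ?subrr //.
  by apply: sumr_ge0 => j _; case/andP: (x01 j); rewrite subr_ge0.
have := leif_AGM F_ge0; rewrite card_ord => -[+ _].
have F_lift (i : 'I_n) : F (widen_ord (leqnSn n) i) = nth 1 s i.
  by rewrite /F /= ltn_ord.
have F_last : F ord_max = S by rewrite /F ltnn.
rewrite !big_ord_recr /= F_last.
under eq_bigr do rewrite F_lift.
under [X in (X + _) / _]eq_bigr do rewrite F_lift.
rewrite (big_nth_pad (x0 := 1) (F := id) le_s_n) //.
have -> : \sum_(i < n) nth 1 s i + S = n%:R.
  rewrite /S -(big_nth_pad (x0 := 1) (F := fun x => 1 - x) le_s_n) ?subrr // -big_split /=.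
  by under eq_bigr do rewrite addrC subrK; rewrite sumr_const card_ord.
done.
Qed.

Section Charging.
Variables (R : realFieldType) (E : R).
Hypothesis E_ge0 : 0 <= E.

(* The level of a residual value: the greedy gain at a step is at least the
   residual of any optimal part and at least the last gain E. *)
Definition level (x : R) : R := Num.max x E.

Definition charge (n : nat) (rho g : nat -> R) : R :=
  rho 0%N - rho n + E - E * \sum_(i < n) ((rho i - rho i.+1) / g i).

(* The properties of the residual weight rho of an optimal part along a greedy
   run of n steps, together with the number m i of its uncovered elements. *)
Record residual_profile (n : nat) (rho : nat -> R) (m : nat -> nat) : Prop := {
  values_ge0 : forall i, 0 <= rho i;
  values_noninc : forall i, (i < n)%N -> rho i.+1 <= rho i;
  values_last : rho n <= E;
  count_noninc : forall i, (i < n)%N -> (m i.+1 <= m i)%N;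
  count_drop : forall i, (i < n)%N -> rho i.+1 < rho i -> (m i.+1 < m i)%N;
  count_pos : forall i, 0 < rho i -> (0 < m i)%N }.

Arguments values_ge0 {n rho m}.
Arguments values_noninc {n rho m}.
Arguments values_last {n rho m}.
Arguments count_noninc {n rho m}.
Arguments count_drop {n rho m}.
Arguments count_pos {n rho m}.

Lemma residual_profile_tail n rho m : residual_profile n.+1 rho m ->
  residual_profile n (fun i => rho i.+1) (fun i => m i.+1).
Proof.
case=> ge0 noninc last cnoninc cdrop cpos.
by split=> // i;
  [exact: (noninc i.+1) | exact: (cnoninc i.+1) | exact: (cdrop i.+1) | exact: cpos].
Qed.

Lemma charge_recl n rho g : charge n.+1 rho g =
  (rho 0%N - rho 1%N) * (1 - E / g 0%N) + charge n (fun i => rho i.+1) (fun i => g i.+1).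
Proof. by rewrite /charge big_ord_recl; ring. Qed.

Lemma level_ge x : x <= level x. Proof. by rewrite le_max lexx. Qed.
Lemma level_geE x : E <= level x. Proof. by rewrite le_max lexx orbT. Qed.
Lemma level_le x y : x <= y -> level x <= level y.
Proof. by move=> le_xy; rewrite ge_max (le_trans le_xy (level_ge y)) level_geE. Qed.
Lemma level_sub x y : y <= x -> level x - level y <= x - y.
Proof. by move=> le_yx; rewrite /level; case: (lerP x E); case: (lerP y E); lra. Qed.

(* A last drop from x to zero pays for the whole level of x. *)
Lemma level_final x : 0 < x -> level x <= x * (1 - E / level x) + E.
Proof.
move=> x_gt0; have lvl_gt0 : 0 < level x := lt_le_trans x_gt0 (level_ge x).
rewrite /level mulrBr mulr1; case: (lerP x E) => [le_xE | lt_Ex].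
  by rewrite divff ?gt_eqF //; lra.
by rewrite mulrCA divff ?gt_eqF // mulr1; lra.
Qed.

(* A drop d from x to y pays for the ratio level y / level x. *)
Lemma level_ratio x y d : 0 < level x -> level x - level y <= d ->
  level x - E * (1 - level y / level x) <= d * (1 - E / level x) + level y.
Proof.
move=> lvl_gt0 le_d; set a := level x; set b := level y; set t := E / a.
have t_le1 : t <= 1 by rewrite /t ler_pdivrMr // mul1r level_geE.
have -> : E * (1 - b / a) = t * (a - b) by rewrite /t; field; rewrite gt_eqF.
have : (1 - t) * (a - b) <= (1 - t) * d by rewrite ler_wpM2l // subr_ge0.
lra.
Qed.

Lemma ratio_witness n rho m : residual_profile n rho m ->
  exists xs : seq R, [/\ (size xs <= (m 0%N).-1)%N, all (fun x => 0 <= x <= 1) xs,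
    E <= level (rho 0%N) * \prod_(x <- xs) x &
    level (rho 0%N) - E * \sum_(x <- xs) (1 - x) <= charge n rho (fun i => level (rho i))].
Proof.
elim: n rho m => [|n IH] rho m prof.
  exists [::]; rewrite !big_nil mulr1 mulr0 subr0 level_geE; split=> //.
  by rewrite /charge big_ord0 mulr0 subr0 subrr add0r /level max_r // (values_last prof).
have [xs [size_xs xs01 xs_prod xs_sum]] := IH _ _ (residual_profile_tail prof).
rewrite charge_recl.
set x := rho 0%N; set y := rho 1%N.
have le_yx : y <= x by apply: (values_noninc prof).
have [eq_xy | lt_yx] := eqVneq y x.
  exists xs; rewrite /level -/y -eq_xy subrr mul0r add0r; split=> //.
  by move: size_xs (count_noninc prof 0%N (ltn0Sn n)); lia.
have {}lt_yx : y < x by rewrite lt_neqAle lt_yx.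
have lt_m := count_drop prof 0%N (ltn0Sn n) lt_yx.
have lvl_gt0 : 0 < level x.
  exact: lt_le_trans (le_lt_trans (values_ge0 prof 1%N) lt_yx) (level_ge x).
case: (posnP (m 1%N)) => [m1_eq0 | m1_gt0].
  have y0 : y = 0.
    apply/eqP; rewrite eq_le (values_ge0 prof) andbT leNgt; apply/negP.
    by move/(count_pos prof); rewrite m1_eq0.
  have xs_nil : xs = [::] by apply/nilP; rewrite /nilp -leqn0; move: size_xs; rewrite m1_eq0.
  exists [::]; rewrite !big_nil mulr1 mulr0 subr0 level_geE; split=> //.
  move: xs_sum; rewrite xs_nil big_nil mulr0 subr0 -/y y0 subr0 /level max_r // => le_E.
  by have := level_final (le_lt_trans (values_ge0 prof 1%N) lt_yx); rewrite /level; lra.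
exists (level y / level x :: xs); split.
- by move: size_xs lt_m m1_gt0 => /=; lia.
- rewrite /= xs01 andbT divr_ge0 ?(ltW lvl_gt0) ?(le_trans E_ge0 (level_geE y)) //=.
  by rewrite ler_pdivrMr // mul1r level_le.
- by rewrite big_cons mulrA mulrCA divff ?gt_eqF // mulr1.
- rewrite big_cons mulrDr opprD addrA.
  have := level_ratio lvl_gt0 (level_sub le_yx); lra.
Qed.

Lemma charge_lower_bound n rho m r : residual_profile n rho m -> (m 0%N <= r.+1)%N ->
  (1 - (1 - r.+1%:R^-1) ^+ r.+1) * rho 0%N <= charge n rho (fun i => level (rho i)).
Proof.
move=> prof le_m_r.
have [xs [size_xs xs01 xs_prod xs_sum]] := ratio_witness prof.
have size_le : (size xs <= r)%N by move: size_xs le_m_r; lia.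
have := prod_mul_sum_compl_le size_le xs01.
have -> : r%:R / r.+1%:R = 1 - r.+1%:R^-1 :> R.
  by rewrite -natr1; field; rewrite natr1 pnatr_eq0.
move: xs_prod xs_sum; set a := (1 - r.+1%:R^-1) ^+ r.+1; set L := level (rho 0%N).
set P := \prod_(x <- xs) x; set S := \sum_(x <- xs) (1 - x) => xs_prod xs_sum PS_le.
have S_ge0 : 0 <= S.
  by rewrite /S big_seq sumr_ge0 // => x /(allP xs01) /andP[_]; rewrite subr_ge0.
have a_le1 : a <= 1.
  rewrite exprn_ile1 // ?subr_ge0 ?gerBl ?invr_ge0 ?ler0n // invf_le1 ?ltr0Sn //.
  by rewrite ler1n.
have ES_le : E * S <= L * a.
  apply: le_trans (ler_wpM2r S_ge0 xs_prod) _.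
  by rewrite -mulrA ler_wpM2l // (le_trans E_ge0 (level_geE _)).
have : (1 - a) * rho 0%N <= (1 - a) * L by rewrite ler_wpM2l ?subr_ge0 // level_ge.
lra.
Qed.

Lemma charge_le_weights n rho g :
  (forall i, 0 <= rho i) -> (forall i, (i < n)%N -> rho i.+1 <= rho i) ->
  (forall i, (i < n)%N -> level (rho i) <= g i) ->
  charge n rho (fun i => level (rho i)) <= charge n rho g.
Proof.
move=> ge0 noninc le_g; rewrite lerD2l lerN2 ler_wpM2l // ler_sum // => i _.
have d_ge0 : 0 <= rho i - rho i.+1 by rewrite subr_ge0 noninc.
have [-> | d_neq0] := eqVneq (rho i - rho i.+1) 0; first by rewrite !mul0r.
have d_gt0 : 0 < rho i - rho i.+1 by rewrite lt_def d_neq0 d_ge0.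
have lvl_gt0 : 0 < level (rho i).
  by apply: lt_le_trans (level_ge _); have := ge0 i.+1; lra.
have lvl_le := le_g i (ltn_ord i).
by rewrite ler_wpM2l // lef_pV2 ?posrE // (lt_le_trans lvl_gt0).
Qed.

(* What a greedy step of gain g contributes to the total charge is at most g. *)
Lemma charge_step_le D g : 0 <= D -> D <= g -> E <= g -> D + E - E * (D / g) <= g.
Proof.
move=> D_ge0 le_Dg le_Eg.
have [g0 | g_neq0] := eqVneq g 0.
  by move: le_Dg le_Eg; rewrite g0 invr0 mulr0 mulr0 => *; lra.
set t := D / g.
have t_le1 : t <= 1 by rewrite ler_pdivrMr ?mul1r // lt_def g_neq0 (le_trans E_ge0).
have : 0 <= (g - E) * (1 - t) by rewrite mulr_ge0 // subr_ge0.
have -> : D = t * g by rewrite /t divfK.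
lra.
Qed.

Lemma sum_charge n (rho : nat -> nat -> R) (g : nat -> R) :
  let drop i := \sum_(j < n) (rho j i - rho j i.+1) in
  \sum_(j < n) charge n (rho j) g = \sum_(i < n) (drop i + E - E * (drop i / g i)).
Proof.
move=> drop; have telescope j : \sum_(i < n) (rho j i - rho j i.+1) = rho j 0%N - rho j n.
  rewrite -opprB -(telescope_sumr _ (leq0n n)) big_mkord -sumrN.
  by apply: eq_bigr => i _; rewrite opprB.
rewrite /charge !sumrB !big_split /= -!mulr_sumr; congr (_ + _ - E * _).
  by rewrite -big_split /drop exchange_big; apply: eq_bigr => j _; rewrite telescope.
by rewrite exchange_big; apply: eq_bigr => i _; rewrite /drop mulr_suml.
Qed.
End Charging.

Section Weights.
Variables (R : realFieldType) (U : finType) (w : U -> R).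
Hypothesis w_ge0 : forall x, 0 <= w x.

Lemma weight_ge0 (S : {set U}) : 0 <= weight w S.
Proof. by apply: sumr_ge0 => x _; apply: w_ge0. Qed.

Lemma weight_set0 : weight w set0 = 0.
Proof. by rewrite /weight big_set0. Qed.

Lemma weight_ID (A B : {set U}) : weight w A = weight w (A :&: B) + weight w (A :\: B).
Proof. by rewrite /weight (big_setID B). Qed.

Lemma weight_sub (A B : {set U}) : A \subset B -> weight w A <= weight w B.
Proof.
move=> sub_AB; rewrite (weight_ID B A) (setIidPr sub_AB) lerDl.
exact: weight_ge0.
Qed.
End Weights.

Lemma union_take0 (U : finType) (s : seq {set U}) : union_seq (take 0 s) = set0.
Proof. by rewrite /union_seq take0 big_nil. Qed.

Lemma union_takeS (U : finType) (s : seq {set U}) i : (i < size s)%N ->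
  union_seq (take i.+1 s) = union_seq (take i s) :|: nth set0 s i.
Proof. by move=> lt_is; rewrite /union_seq (take_nth set0 lt_is) big_rcons. Qed.

Section GreedyAnalysis.
Variables (R : realFieldType) (U : finType) (Rc : {set {set U}}) (k : nat) (w : U -> R).
Hypothesis w_ge0 : forall x, 0 <= w x.
Variables (g opt : seq {set U}).
Hypothesis g_greedy : greedy_output w Rc k g.
Hypothesis opt_sel : is_k_selection Rc k opt.

Definition covered (i : nat) : {set U} := union_seq (take i g).

Definition gain (i : nat) : R := weight w (nth set0 g i :\: covered i).

(* The j-th optimal set minus the earlier ones: these parts are disjoint and
   cover the optimal union. *)
Definition opt_part (j : nat) : {set U} := nth set0 opt j :\: union_seq (take j opt).

Definition residual (j i : nat) : R := weight w (opt_part j :\: covered i).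

Lemma size_greedy : size g = k. Proof. by case: g_greedy. Qed.
Lemma size_opt : size opt = k. Proof. by case: opt_sel. Qed.

Lemma coveredS i : (i < k)%N -> covered i.+1 = covered i :|: nth set0 g i.
Proof. by move=> lt_ik; rewrite /covered union_takeS // size_greedy. Qed.

Lemma covered_mono i : (i < k)%N -> covered i \subset covered i.+1.
Proof. by move=> lt_ik; rewrite coveredS // subsetUl. Qed.

Lemma greedy_choice i : (i < k)%N -> nth set0 g i \in Rc /\
  forall T, T \in Rc -> weight w (T :\: covered i) <= gain i.
Proof. by case: g_greedy => _ /(_ i). Qed.

Lemma opt_in j : (j < k)%N -> nth set0 opt j \in Rc.
Proof. by case: opt_sel => size_o /all_nthP; rewrite size_o; apply. Qed.

Lemma gain_noninc i i' : (i <= i')%N -> (i' < k)%N -> gain i' <= gain i.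
Proof.
elim: i' => [|i' IH]; first by rewrite leqn0 => /eqP ->.
rewrite leq_eqVlt ltnS => /orP[/eqP -> // | le_ii'] lt_i'k.
apply: le_trans (IH le_ii' (ltnW lt_i'k)).
apply: le_trans (_ : weight w (nth set0 g i'.+1 :\: covered i') <= _).
  by apply: (weight_sub w_ge0); apply: setDS; exact: covered_mono (ltnW lt_i'k).
by apply: (greedy_choice (ltnW lt_i'k)).2; apply: (greedy_choice lt_i'k).1.
Qed.

(* The greedy choice at step i beats the optimal set containing opt_part j. *)
Lemma residual_le_gain j i : (j < k)%N -> (i < k)%N -> residual j i <= gain i.
Proof.
move=> lt_jk lt_ik; apply: le_trans (_ : weight w (nth set0 opt j :\: covered i) <= _).
  by apply: weight_sub => //; apply: setSD; apply: subsetDl.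
by apply: (greedy_choice lt_ik).2; apply: opt_in.
Qed.

Lemma residual_noninc j i : (i < k)%N -> residual j i.+1 <= residual j i.
Proof. by move=> lt_ik; apply: weight_sub => //; apply: setDS; apply: covered_mono. Qed.

Lemma residual_drop j i : (i < k)%N ->
  residual j i - residual j i.+1 = weight w (opt_part j :&: (nth set0 g i :\: covered i)).
Proof.
move=> lt_ik; rewrite /residual (weight_ID w (opt_part j :\: covered i) (nth set0 g i)).
rewrite setDDl -coveredS // addrK; congr (weight w _).
by apply/setP => x; rewrite !inE; do ![case: (_ \in _)].
Qed.

Lemma opt_prefix_weight (Y : {set U}) i : (i <= k)%N ->
  weight w (union_seq (take i opt) :&: Y) = \sum_(j < i) weight w (opt_part j :&: Y).
Proof.
elim: i => [|i IH] le_ik; first by rewrite union_take0 set0I weight_set0 big_ord0.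
rewrite big_ord_recr /= -IH ?(ltnW le_ik) // union_takeS ?size_opt //.
rewrite (weight_ID w _ (union_seq (take i opt))); congr (weight w _ + weight w _).
  by apply/setP => x; rewrite !inE; do ![case: (_ \in _)].
by apply/setP => x; rewrite /opt_part !inE; do ![case: (_ \in _)].
Qed.

Lemma opt_weight : weight w (union_seq opt) = \sum_(j < k) residual j 0%N.
Proof.
have := opt_prefix_weight setT (leqnn k); rewrite setIT -size_opt take_size => ->.
by apply: eq_bigr => j _; rewrite setIT /residual /covered union_take0 setD0.
Qed.

Lemma greedy_weight : weight w (union_seq g) = \sum_(i < k) gain i.
Proof.
suff prefix i : (i <= k)%N -> weight w (covered i) = \sum_(l < i) gain l.
  by rewrite -(take_size g) size_greedy prefix.
elim: i => [|i IH] le_ik; first by rewrite /covered union_take0 weight_set0 big_ord0.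
rewrite big_ord_recr /= -IH ?(ltnW le_ik) // coveredS //.
rewrite (weight_ID w _ (covered i)) setUK; congr (_ + weight w _).
by apply/setP => x; rewrite !inE; do ![case: (_ \in _)].
Qed.

Lemma drops_le_gain i : (i < k)%N -> \sum_(j < k) (residual j i - residual j i.+1) <= gain i.
Proof.
move=> lt_ik; under eq_bigr => j _ do rewrite residual_drop //.
by rewrite -opt_prefix_weight // weight_sub // subsetIr.
Qed.

Lemma residual_profile_opt j : (0 < k)%N -> (j < k)%N ->
  residual_profile (gain k.-1) k (residual j) (fun i => #|opt_part j :\: covered i|).
Proof.
move=> k_gt0 lt_jk; split.
- by move=> i; apply: weight_ge0.
- by move=> i; apply: residual_noninc.
- have lt_k1 : (k.-1 < k)%N by rewrite prednK.
  apply: le_trans (residual_le_gain lt_jk lt_k1).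
  by rewrite -{1}(prednK k_gt0) residual_noninc.
- by move=> i lt_ik; apply: subset_leq_card; apply: setDS; apply: covered_mono.
- move=> i lt_ik lt_res; apply: proper_card; rewrite properEneq setDS ?covered_mono // andbT.
  by apply: contraTneq lt_res => eq_parts; rewrite /residual eq_parts ltxx.
- move=> i; rewrite lt0n; apply: contraTneq => /cards0_eq empty.
  by rewrite /residual empty weight_set0 ltxx.
Qed.

(* The theorem for set sizes bounded by r + 1: the per-part lower bounds sum
   to at most the total charge, which is at most the greedy weight. *)
Lemma greedy_approximation r : (0 < k)%N -> (forall S, S \in Rc -> (#|S| <= r.+1)%N) ->
  (1 - (1 - r.+1%:R^-1) ^+ r.+1) * weight w (union_seq opt) <= weight w (union_seq g).
Proof.
move=> k_gt0 size_le; set E := gain k.-1.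
have E_ge0 : 0 <= E := weight_ge0 w_ge0 _.
have last_le i : (i < k)%N -> E <= gain i by move=> lt_ik; rewrite gain_noninc // -ltnS prednK.
rewrite opt_weight greedy_weight mulr_sumr.
apply: le_trans (_ : \sum_(j < k) charge E k (residual j) gain <= _).
  apply: ler_sum => j _.
  have prof := residual_profile_opt k_gt0 (ltn_ord j).
  have part_le : (#|opt_part j :\: covered 0| <= r.+1)%N.
    rewrite /covered union_take0 setD0 (leq_trans (subset_leq_card (subsetDl _ _))) //.
    exact/size_le/opt_in.
  apply: le_trans (charge_lower_bound E_ge0 prof part_le) _.
  apply: charge_le_weights => // [i | i | i lt_ik]; first exact: weight_ge0.
    exact: residual_noninc.
  by rewrite ge_max residual_le_gain ?last_le.
rewrite sum_charge; apply: ler_sum => i _.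
apply: charge_step_le => //; last exact: last_le.
  by apply: sumr_ge0 => j _; rewrite subr_ge0 residual_noninc.
exact: drops_le_gain.
Qed.
End GreedyAnalysis.

Theorem corollary4p2 (R : realFieldType) (U : finType) (Rc : {set {set U}})
    (k r : nat) (w : U -> R) :
  (0 < k)%N ->
  (forall x : U, 0 <= w x) ->
  (forall S : {set U}, S \in Rc -> (#|S| <= r)%N) ->
  forall g : seq {set U}, greedy_output w Rc k g ->
  forall opt : seq {set U}, is_k_selection Rc k opt ->
    (1 - (1 - r%:R^-1) ^+ r) * weight w (union_seq opt) <= weight w (union_seq g).
Proof.
move=> k_gt0 w_ge0 size_le g g_greedy opt opt_sel.
case: r size_le => [|r] size_le.
  by rewrite expr0 subrr mul0r; apply: weight_ge0.
exact (greedy_approximation w_ge0 g_greedy opt_sel k_gt0 size_le).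
Qed.
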